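(* Let $\Gamma$ be a regular axis-parallel square grid in the plane whose squares have diameter $1$ (side length $1/\sqrt{2}$), and call the open squares of $\Gamma$ cells. Let $p$ and $q$ be two points lying in different cells $\pi_p$ and $\pi_q$, and let $D(p,q)$ be the closed disk having segment $pq$ as a diameter. Let $X$ be the set of cells consisting of $\pi_p$, $\pi_q$, and all $+$-neighbors of $\pi_p$ and of $\pi_q$. 1. If $|pq|\le 1$, then $D(p,q)$ does not intersect any cell outside the neighborhoods of $\pi_p$ and $\pi_q$. 2. If $|pq|\le 1$, then $D(p,q)$ intersects at most two cells that are not in $X$. 3. If $|pq|\le 1/\sqrt{2}$, then $D(p,q)$ does not intersect any cell that is not in $X$.
   Context: The neighbors of a cell $\pi$ are the eight cells that share a side or a corner with $\pi$; the $+$-neighbors of $\pi$ are the four cells sharing a side with $\pi$. The neighborhood of $\pi$ consists of $\pi$ together with its eight neighbors. Cells are open (they do not contain their boundary), and disks are closed. *)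

From Stdlib Require Import Reals Lra Lia ZArith List.
Open Scope R_scope.

Definition point := (R * R)%type.

Definition pdist (p q : point) : R :=
  sqrt ((fst p - fst q) ^ 2 + (snd p - snd q) ^ 2).

(* Side length of the grid squares: squares have diameter 1. *)
Definition side : R := 1 / sqrt 2.

(* A cell is indexed by (i,j) : Z*Z; the grid has an arbitrary origin (ox,oy).
   Cell (i,j) is the OPEN square (ox + i*side, ox + (i+1)*side) x
   (oy + j*side, oy + (j+1)*side). *)
Definition cell := (Z * Z)%type.

Definition in_cell (ox oy : R) (c : cell) (x : point) : Prop :=
  ox + IZR (fst c) * side < fst x < ox + (IZR (fst c) + 1) * side /\
  oy + IZR (snd c) * side < snd x < oy + (IZR (snd c) + 1) * side.

Definition in_diam_disk (p q x : point) : Prop :=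
  pdist x ((fst p + fst q) / 2, (snd p + snd q) / 2) <= pdist p q / 2.

Definition disk_meets (ox oy : R) (p q : point) (c : cell) : Prop :=
  exists x, in_diam_disk p q x /\ in_cell ox oy c x.

Definition in_nbhd (c c' : cell) : Prop :=
  (Z.abs (fst c - fst c') <= 1)%Z /\ (Z.abs (snd c - snd c') <= 1)%Z.

Definition plus_nbr (c c' : cell) : Prop :=
  (Z.abs (fst c - fst c') + Z.abs (snd c - snd c') = 1)%Z.

Definition in_X (cp cq c : cell) : Prop :=
  c = cp \/ c = cq \/ plus_nbr cp c \/ plus_nbr cq c.

(* Scaling by 1/side turns the cells into open unit squares and doubles squared
   distances, so |pq|^2 <= 2 (resp. <= 1).  Points of cells whose indices differ by m
   in one coordinate are more than m - 1 apart in that coordinate; hence the squared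
   distance between points of cells c and c' exceeds the integer [cell_gap c c']
   strictly, unless that gap is 0.  Every point x of D(p,q) satisfies
   |xp|^2 + |xq|^2 <= |pq|^2, and two points of D(p,q) are at most |pq| apart.  So a
   cell c met by the disk has cell_gap cp c + cell_gap cq c < 2 (resp. < 1), and two
   such cells have gap < 2: parts 1 and 3 follow at once, and part 2 becomes a finite
   check on the cells around cp, done by computation. *)

From Stdlib Require Import Reals Lra Lia ZArith List Bool.
Import ListNotations.
Open Scope R_scope.

Definition gap (z : Z) : Z := Z.max 0 (Z.abs z - 1).

Definition cell_gap (c c' : cell) : Z :=
  (gap (fst c - fst c') * gap (fst c - fst c') +
   gap (snd c - snd c') * gap (snd c - snd c'))%Z.

Definition shift (s c : cell) : cell := (fst c - fst s, snd c - snd s)%Z.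

Definition extra_cell (cp cq c : cell) : Prop :=
  (cell_gap cp c + cell_gap cq c < 2)%Z /\ ~ in_X cp cq c.

Section CellCombinatorics.
Local Open Scope Z_scope.

Lemma gap_nonneg z : 0 <= gap z.
Proof. unfold gap; lia. Qed.

Lemma cell_gap_nonneg c c' : 0 <= cell_gap c c'.
Proof.
  unfold cell_gap.
  apply Z.add_nonneg_nonneg; apply Z.square_nonneg.
Qed.

Lemma abs_le2_of_gap_sq_lt2 z : gap z * gap z < 2 -> Z.abs z <= 2.
Proof. pose proof (gap_nonneg z). unfold gap in *. nia. Qed.

Lemma nbhd_of_cell_gap0 c c' : cell_gap c c' = 0 -> in_nbhd c c'.
Proof.
  unfold cell_gap, in_nbhd, gap.
  pose proof (Z.square_nonneg (Z.max 0 (Z.abs (fst c - fst c') - 1))).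
  pose proof (Z.square_nonneg (Z.max 0 (Z.abs (snd c - snd c') - 1))).
  nia.
Qed.

Lemma in_X_of_nbhd cp cq c : cp <> cq ->
  in_nbhd cp cq -> in_nbhd cp c -> in_nbhd cq c -> in_X cp cq c.
Proof.
  destruct cp as [i j], cq as [i' j'], c as [k l].
  unfold in_nbhd, in_X, plus_nbr; simpl; intros ne.
  assert (i <> i' \/ j <> j') by (destruct (Z.eq_dec i i'), (Z.eq_dec j j'); subst; auto).
  destruct (Z.eq_dec k i), (Z.eq_dec l j), (Z.eq_dec k i'), (Z.eq_dec l j'); subst; auto;
    intros; right; right; lia.
Qed.

Lemma nbhd_of_cell_gap_sum_lt2 cp cq c :
  cell_gap cp c + cell_gap cq c < 2 -> in_nbhd cp c \/ in_nbhd cq c.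
Proof.
  intros h.
  pose proof (cell_gap_nonneg cp c); pose proof (cell_gap_nonneg cq c).
  assert (cell_gap cp c = 0 \/ cell_gap cq c = 0) as [|] by lia;
    [left | right]; apply nbhd_of_cell_gap0; assumption.
Qed.

Lemma cell_gap_shift s c c' : cell_gap (shift s c) (shift s c') = cell_gap c c'.
Proof.
  unfold cell_gap, shift; simpl.
  replace (fst c - fst s - (fst c' - fst s)) with (fst c - fst c') by ring.
  replace (snd c - snd s - (snd c' - snd s)) with (snd c - snd c') by ring.
  reflexivity.
Qed.

Lemma shift_inj s c c' : shift s c = shift s c' -> c = c'.
Proof.
  destruct c as [a b], c' as [a' b']; unfold shift; simpl.
  intros E; injection E; intros; f_equal; lia.
Qed.

Lemma in_X_shift s cp cq c :
  in_X (shift s cp) (shift s cq) (shift s c) -> in_X cp cq c.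
Proof.
  unfold in_X, plus_nbr.
  intros [E | [E | [E | E]]];
    [left | right; left | right; right; left | right; right; right];
    try (apply (shift_inj s); exact E); revert E; unfold shift; simpl; lia.
Qed.

Lemma shift_self s : shift s s = (0, 0).
Proof. unfold shift; f_equal; ring. Qed.

Lemma extra_cell_shift s cp cq c :
  extra_cell cp cq c -> extra_cell (shift s cp) (shift s cq) (shift s c).
Proof.
  intros [h hX]; split.
  - rewrite !cell_gap_shift; exact h.
  - intros hX'; apply hX, (in_X_shift s); exact hX'.
Qed.

Definition cell_eqb (c c' : cell) : bool := (fst c =? fst c') && (snd c =? snd c').

Definition plus_nbrb (c c' : cell) : bool :=
  Z.abs (fst c - fst c') + Z.abs (snd c - snd c') =? 1.

Definition in_Xb (cp cq c : cell) : bool :=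
  cell_eqb c cp || cell_eqb c cq || plus_nbrb cp c || plus_nbrb cq c.

Lemma cell_eqb_eq c c' : cell_eqb c c' = true -> c = c'.
Proof.
  destruct c, c'; unfold cell_eqb; simpl.
  rewrite andb_true_iff, !Z.eqb_eq; intros [-> ->]; reflexivity.
Qed.

Lemma in_Xb_in_X cp cq c : in_Xb cp cq c = true -> in_X cp cq c.
Proof.
  unfold in_Xb, in_X, plus_nbrb, plus_nbr.
  rewrite !orb_true_iff, !Z.eqb_eq.
  intros [[[h | h] | h] | h]; auto using cell_eqb_eq.
Qed.

(* The finite check works relative to cp, translated to the origin by [shift cp]. *)
Definition window : list cell := list_prod [-2; -1; 0; 1; 2] [-2; -1; 0; 1; 2].

Lemma in_window c : cell_gap (0, 0) c < 2 -> In c window.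
Proof.
  destruct c as [a b]; unfold cell_gap; cbn [fst snd]; intros h.
  pose proof (Z.square_nonneg (gap (0 - a))); pose proof (Z.square_nonneg (gap (0 - b))).
  pose proof (abs_le2_of_gap_sq_lt2 (0 - a) ltac:(lia)).
  pose proof (abs_le2_of_gap_sq_lt2 (0 - b) ltac:(lia)).
  apply in_prod_iff; simpl; lia.
Qed.

Definition extra_cells (d : cell) : list cell :=
  filter (fun c => (cell_gap (0, 0) c + cell_gap d c <? 2) && negb (in_Xb (0, 0) d c))
    window.

Lemma in_extra_cells d c : extra_cell (0, 0) d c -> In c (extra_cells d).
Proof.
  intros [h hX]; apply filter_In; split.
  - apply in_window; pose proof (cell_gap_nonneg d c); lia.
  - apply andb_true_iff; split; [apply Z.ltb_lt; exact h|].
    apply negb_true_iff, not_true_iff_false; intros hb; apply hX, in_Xb_in_X, hb.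
Qed.

Definition close (c c' : cell) : bool := cell_gap c c' <? 2.

Definition no_close_triple (cs : list cell) : bool :=
  forallb (fun c1 => forallb (fun c2 => forallb (fun c3 =>
    implb (close c1 c2 && close c1 c3 && close c2 c3)
          (cell_eqb c1 c2 || cell_eqb c1 c3 || cell_eqb c2 c3)) cs) cs) cs.

Lemma no_close_triple_extra_cells :
  forallb (fun d => no_close_triple (extra_cells d)) window = true.
Proof. vm_compute; reflexivity. Qed.

Lemma no_close_tripleP cs c1 c2 c3 : no_close_triple cs = true ->
  In c1 cs -> In c2 cs -> In c3 cs ->
  cell_gap c1 c2 < 2 -> cell_gap c1 c3 < 2 -> cell_gap c2 c3 < 2 ->
  c1 = c2 \/ c1 = c3 \/ c2 = c3.
Proof.
  unfold no_close_triple, close; rewrite forallb_forall; intros h h1 h2 h3 h12 h13 h23.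
  specialize (h c1 h1); rewrite forallb_forall in h; specialize (h c2 h2).
  rewrite forallb_forall in h; specialize (h c3 h3).
  apply Z.ltb_lt in h12, h13, h23; rewrite h12, h13, h23 in h; simpl in h.
  rewrite !orb_true_iff in h.
  destruct h as [[h | h] | h]; apply cell_eqb_eq in h; auto.
Qed.

Lemma extra_cells_close_triple cp cq c1 c2 c3 : cell_gap cp cq < 2 ->
  extra_cell cp cq c1 -> extra_cell cp cq c2 -> extra_cell cp cq c3 ->
  cell_gap c1 c2 < 2 -> cell_gap c1 c3 < 2 -> cell_gap c2 c3 < 2 ->
  c1 = c2 \/ c1 = c3 \/ c2 = c3.
Proof.
  intros hpq h1 h2 h3 h12 h13 h23.
  assert (hd : In (shift cp cq) window).
  { apply in_window; rewrite <- (shift_self cp), cell_gap_shift; exact hpq. }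
  assert (hin : forall c,
            extra_cell cp cq c -> In (shift cp c) (extra_cells (shift cp cq))).
  { intros c hc; apply in_extra_cells; rewrite <- (shift_self cp).
    apply extra_cell_shift; exact hc. }
  pose proof (proj1 (forallb_forall _ _) no_close_triple_extra_cells _ hd) as htriple.
  rewrite <- (cell_gap_shift cp) in h12, h13, h23.
  destruct (no_close_tripleP _ _ _ _ htriple (hin _ h1) (hin _ h2) (hin _ h3) h12 h13 h23)
    as [e | [e | e]]; apply shift_inj in e; auto.
Qed.

Lemma extra_cells_length_le2 cp cq (l : list cell) : cell_gap cp cq < 2 -> NoDup l ->
  (forall c, In c l -> extra_cell cp cq c) ->
  (forall c c', In c l -> In c' l -> cell_gap c c' < 2) ->
  (length l <= 2)%nat.
Proof.
  intros hpq hl hextra hclose.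
  destruct l as [| c1 [| c2 [| c3 l]]]; simpl; try lia; exfalso.
  apply NoDup_cons_iff in hl as [n1 hl]; apply NoDup_cons_iff in hl as [n2 _].
  destruct (extra_cells_close_triple cp cq c1 c2 c3) as [e | [e | e]];
    subst; simpl in *; auto 7.
Qed.

End CellCombinatorics.

Definition strict_lb (g : Z) (s : R) : Prop := 0 <= s /\ (g = 0%Z \/ IZR g < s).

Lemma strict_lb_add g g' s s' :
  strict_lb g s -> strict_lb g' s' -> strict_lb (g + g') (s + s').
Proof.
  intros [hs [-> | h]] [hs' [-> | h']]; split; try lra;
    [left; reflexivity | right; rewrite plus_IZR; lra ..].
Qed.

Lemma strict_lb_lt g s (B : Z) : strict_lb g s -> s <= IZR B -> (0 < B)%Z -> (g < B)%Z.
Proof. intros [_ [-> | h]] hB hB0; [exact hB0 | apply lt_IZR; lra]. Qed.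

Lemma strict_lb_gap_sq (k k' : Z) (a b : R) :
  IZR k < a < IZR k + 1 -> IZR k' < b < IZR k' + 1 ->
  strict_lb (gap (k - k') * gap (k - k')) ((a - b) ^ 2).
Proof.
  intros ha hb; split; [apply pow2_ge_0|].
  destruct (Z.le_gt_cases (Z.abs (k - k')) 1) as [h | h]; [left; unfold gap; lia | right].
  assert (hg : (1 <= gap (k - k'))%Z) by (unfold gap; lia).
  apply IZR_le in hg.
  rewrite mult_IZR.
  destruct (Z.le_gt_cases 0 (k - k')).
  - assert (e : IZR (gap (k - k')) = IZR k - IZR k' - 1).
    { rewrite <- !minus_IZR; f_equal; unfold gap; lia. }
    nra.
  - assert (e : IZR (gap (k - k')) = IZR k' - IZR k - 1).
    { rewrite <- !minus_IZR; f_equal; unfold gap; lia. }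
    nra.
Qed.

Definition in_unit_cell (c : cell) (x : point) : Prop :=
  IZR (fst c) < fst x < IZR (fst c) + 1 /\ IZR (snd c) < snd x < IZR (snd c) + 1.

Definition sqdist (u v : point) : R := (fst u - fst v) ^ 2 + (snd u - snd v) ^ 2.

Lemma strict_lb_cell_gap c c' x y : in_unit_cell c x -> in_unit_cell c' y ->
  strict_lb (cell_gap c c') (sqdist x y).
Proof.
  intros [hx1 hx2] [hy1 hy2].
  apply strict_lb_add; apply strict_lb_gap_sq; assumption.
Qed.

Definition normalize (ox oy : R) (x : point) : point :=
  ((fst x - ox) / side, (snd x - oy) / side).

Lemma side_pos : 0 < side.
Proof. unfold side; apply Rdiv_lt_0_compat; [lra | apply sqrt_lt_R0; lra]. Qed.

Lemma scale_interval (o s a x : R) :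
  0 < s -> o + a * s < x < o + (a + 1) * s -> a < (x - o) / s < a + 1.
Proof.
  intros hs hx.
  replace a with ((o + a * s - o) / s) at 1 by (field; lra).
  replace (a + 1) with ((o + (a + 1) * s - o) / s) by (field; lra).
  split; apply Rmult_lt_compat_r; try apply Rinv_0_lt_compat; lra.
Qed.

Lemma in_cell_normalize ox oy c x :
  in_cell ox oy c x -> in_unit_cell c (normalize ox oy x).
Proof.
  pose proof side_pos; intros [h1 h2]; split; apply scale_interval; assumption.
Qed.

Lemma sqdist_normalize ox oy u v :
  sqdist (normalize ox oy u) (normalize ox oy v) = 2 * sqdist u v.
Proof.
  assert (h2 : sqrt 2 <> 0) by (apply Rgt_not_eq, sqrt_lt_R0; lra).
  unfold sqdist, normalize, side; cbn [fst snd].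
  replace ((fst u - ox) / (1 / sqrt 2) - (fst v - ox) / (1 / sqrt 2))
    with ((fst u - fst v) * sqrt 2) by (field; exact h2).
  replace ((snd u - oy) / (1 / sqrt 2) - (snd v - oy) / (1 / sqrt 2))
    with ((snd u - snd v) * sqrt 2) by (field; exact h2).
  rewrite !Rpow_mult_distr, pow2_sqrt by lra; ring.
Qed.

Lemma sqdist_nonneg u v : 0 <= sqdist u v.
Proof.
  unfold sqdist.
  pose proof (pow2_ge_0 (fst u - fst v)); pose proof (pow2_ge_0 (snd u - snd v)); lra.
Qed.

Lemma le_sq_of_sqrt_le a r : 0 <= a -> sqrt a <= r -> a <= r ^ 2.
Proof.
  intros ha h; rewrite <- (pow2_sqrt a ha) at 1.
  apply pow_incr; split; [apply sqrt_pos | exact h].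
Qed.

Lemma in_diam_disk_sqdist p q x : in_diam_disk p q x ->
  4 * sqdist x ((fst p + fst q) / 2, (snd p + snd q) / 2) <= sqdist p q.
Proof.
  intros h%le_sq_of_sqrt_le; [|apply sqdist_nonneg].
  replace ((pdist p q / 2) ^ 2) with (sqrt (sqdist p q) ^ 2 / 4) in h
    by (unfold pdist, sqdist; field).
  rewrite pow2_sqrt in h by apply sqdist_nonneg.
  unfold sqdist in *; lra.
Qed.

Lemma diam_disk_sqdist_sum p q x : in_diam_disk p q x ->
  sqdist p x + sqdist q x <= sqdist p q.
Proof. intros h%in_diam_disk_sqdist; unfold sqdist in *; cbn [fst snd] in *; nra. Qed.

Lemma diam_disk_sqdist_le p q x y : in_diam_disk p q x -> in_diam_disk p q y ->
  sqdist x y <= sqdist p q.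
Proof.
  intros hx%in_diam_disk_sqdist hy%in_diam_disk_sqdist.
  unfold sqdist in *; cbn [fst snd] in *.
  pose proof (pow2_ge_0 (fst x + fst y - fst p - fst q)).
  pose proof (pow2_ge_0 (snd x + snd y - snd p - snd q)).
  nra.
Qed.

Lemma inv_sqrt2_sq : (1 / sqrt 2) ^ 2 = 1 / 2.
Proof.
  assert (sqrt 2 <> 0) by (apply Rgt_not_eq, sqrt_lt_R0; lra).
  replace ((1 / sqrt 2) ^ 2) with (1 / sqrt 2 ^ 2) by (field; assumption).
  rewrite pow2_sqrt by lra; reflexivity.
Qed.

Section DiskCells.
Variables (ox oy : R) (p q : point) (cp cq : cell) (B : Z).
Hypotheses (hp : in_cell ox oy cp p) (hq : in_cell ox oy cq q).
Hypotheses (hB : 2 * sqdist p q <= IZR B) (B_pos : (0 < B)%Z).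

Let P := normalize ox oy p.
Let Q := normalize ox oy q.

Lemma cell_gap_lt_bound : (cell_gap cp cq < B)%Z.
Proof.
  apply (strict_lb_lt _ (sqdist P Q)).
  - apply strict_lb_cell_gap; apply in_cell_normalize; assumption.
  - unfold P, Q; rewrite sqdist_normalize; exact hB.
  - exact B_pos.
Qed.

Lemma disk_meets_cell_gap_lt c :
  disk_meets ox oy p q c -> (cell_gap cp c + cell_gap cq c < B)%Z.
Proof.
  intros [x [hx hc]].
  pose proof (diam_disk_sqdist_sum p q x hx).
  apply (strict_lb_lt _ (sqdist P (normalize ox oy x) + sqdist Q (normalize ox oy x))).
  - apply strict_lb_add; apply strict_lb_cell_gap; apply in_cell_normalize; assumption.
  - unfold P, Q; rewrite !sqdist_normalize; lra.
  - exact B_pos.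
Qed.

Lemma disk_meets2_cell_gap_lt c c' : disk_meets ox oy p q c -> disk_meets ox oy p q c' ->
  (cell_gap c c' < B)%Z.
Proof.
  intros [x [hx hc]] [y [hy hc']].
  pose proof (diam_disk_sqdist_le p q x y hx hy).
  apply (strict_lb_lt _ (sqdist (normalize ox oy x) (normalize ox oy y))).
  - apply strict_lb_cell_gap; apply in_cell_normalize; assumption.
  - rewrite sqdist_normalize; lra.
  - exact B_pos.
Qed.

End DiskCells.

Theorem lemma5 (ox oy : R) (p q : point) (cp cq : cell) :
  in_cell ox oy cp p -> in_cell ox oy cq q -> cp <> cq ->
  (pdist p q <= 1 ->
     (forall c, disk_meets ox oy p q c -> in_nbhd cp c \/ in_nbhd cq c) /\
     (forall l : list cell, NoDup l ->
        (forall c, In c l -> disk_meets ox oy p q c /\ ~ in_X cp cq c) ->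
        (length l <= 2)%nat)) /\
  (pdist p q <= 1 / sqrt 2 ->
     forall c, disk_meets ox oy p q c -> in_X cp cq c).
Proof.
  intros hp hq hpq; split.
  - intros hd.
    assert (hB : 2 * sqdist p q <= IZR 2).
    { pose proof (le_sq_of_sqrt_le _ _ (sqdist_nonneg p q) hd); rewrite pow1 in *; lra. }
    split.
    + intros c hc; apply nbhd_of_cell_gap_sum_lt2.
      eapply disk_meets_cell_gap_lt; eauto; lia.
    + intros l hl hc; apply (extra_cells_length_le2 cp cq); auto.
      * eapply cell_gap_lt_bound; eauto; lia.
      * intros c hin; destruct (hc c hin) as [hm hX]; split; [| exact hX].
        eapply disk_meets_cell_gap_lt; eauto; lia.
      * intros c c' hin hin'.
        eapply disk_meets2_cell_gap_lt; [eauto | lia | apply hc ..]; assumption.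
  - intros hd c hc.
    assert (hB : 2 * sqdist p q <= IZR 1).
    { pose proof (le_sq_of_sqrt_le _ _ (sqdist_nonneg p q) hd).
      rewrite inv_sqrt2_sq in *; lra. }
    assert (hpq' : (cell_gap cp cq < 1)%Z) by (eapply cell_gap_lt_bound; eauto; lia).
    assert (hc' : (cell_gap cp c + cell_gap cq c < 1)%Z)
      by (eapply disk_meets_cell_gap_lt; eauto; lia).
    pose proof (cell_gap_nonneg cp cq); pose proof (cell_gap_nonneg cp c);
      pose proof (cell_gap_nonneg cq c).
    apply in_X_of_nbhd; auto; apply nbhd_of_cell_gap0; lia.
Qed.
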